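(* Consider strings $P$ and $S$ such that $|S|\le |Q_k|+4\tau$ and $P$ contains $Q_k$ as a substring. Then $P$ occurs in $S$ at position $p$ if and only if $r_k(P)$ occurs in $r_k(S)$ at position $p$.
   Context: For a string $S$, $S[1..p]$ is a period of $S$ if $S[i]=S[i+p]$ for $1\le i\le |S|-p$, and $\mathrm{per}(S)$ denotes the length of the shortest period of $S$. Let $\tau\ge1$ and $\ell>10\tau$ be integers, $S_k$ a string of length at least $\ell$, and $Q_k = S_k[1+2\tau..\ell]$, so $|Q_k|=\ell-2\tau\ge 8\tau$. Let $\rho=Q_k[1..\mathrm{per}(Q_k)]$. If $\mathrm{per}(Q_k) > 4\tau$, define $Q_k' = \#$, where $\#$ is a special letter not in the main alphabet. Otherwise write $Q_k=\rho^t\rho'$ with $\rho'$ a prefix of $\rho$, and set $Q_k'=\rho^{t'}\rho'$ for some $t'\le t$ chosen so that $8\tau\le |Q_k'|<12\tau$. For any string $S$, define $r_k(S)=\varepsilon$ (the empty string) if $S$ does not contain $Q_k$, and otherwise $r_k(S)$ is the string obtained from $S$ by replacing the first occurrence of $Q_k$ with $Q'_k$. *)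

From mathcomp Require Import all_boot.
Set Implicit Arguments. Unset Strict Implicit. Unset Printing Implicit Defensive.

(* p is a period of s: 1 <= p and s[i] = s[i+p] for all valid i
   (equivalently the prefix of length |s|-p equals the suffix starting at p). *)
Definition is_period (A : eqType) (s : seq A) (p : nat) : bool :=
  (0 < p) && (take (size s - p) s == drop p s).

(* per s = length of the shortest period (|s| itself is always a period). *)
Definition per (A : eqType) (s : seq A) : nat :=
  (find (is_period s) (iota 1 (size s))).+1.

(* Q_k = S_k[1+2tau .. ell] *)
Definition Qk (A : eqType) (tau ell : nat) (Sk : seq A) : seq A :=
  drop (2 * tau) (take ell Sk).

Definition spow (A : eqType) (rho : seq A) (t : nat) : seq A :=
  flatten (nseq t rho).

(* Extended alphabet: Some a for letters of A, None for the special letter #. *)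
Definition hash {A : Type} : option A := None.

Definition valid_Qprime (A : eqType) (tau : nat) (Q : seq A)
    (Q' : seq (option A)) : Prop :=
  let rho := take (per Q) Q in
  if 4 * tau < per Q then Q' = [:: hash]
  else exists (t t' : nat) (rho' : seq A),
      [/\ Q = spow rho t ++ rho', prefix rho' rho, t' <= t,
          Q' = map Some (spow rho t' ++ rho') &
          8 * tau <= size Q' < 12 * tau].

Definition rk (A : eqType) (Q : seq A) (Q' : seq (option A)) (S : seq A)
    : seq (option A) :=
  if infix Q S then
    let i := infix_index Q S in
    map Some (take i S) ++ Q' ++ map Some (drop (i + size Q) S)
  else [::].

(* P occurs in S at (0-based) position p. *)
Definition occurs_at (T : eqType) (P S : seq T) (p : nat) : bool :=
  take (size P) (drop p S) == P.

From mathcomp Require Import all_boot zify.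
Set Implicit Arguments. Unset Strict Implicit. Unset Printing Implicit Defensive.

(* Let a be the position of the first Q in P.  Both directions reduce to showing
   that Q occurs in S at p + a and that r_k may as well replace this occurrence
   of Q instead of the first one: then r_k acts on P and S at aligned positions.
   Since |S| <= |Q| + 4 tau, occurrences of Q in S start less than 4 tau apart.
   If per Q > 4 tau they therefore coincide, and the letter # of r_k(P) can only
   be matched by the # of r_k(S).  If q = per Q <= 4 tau, Q is q-periodic and r_k
   deletes c * q letters of it; q-periodic runs overlapping in q letters merge,
   deleting a multiple of q letters anywhere inside a run gives the same string,
   and the remaining |Q| - c * q >= 8 tau letters leave enough overlap to
   transfer occurrences in both directions. *)

Lemma size_spow (T : eqType) (rho : seq T) t : size (spow rho t) = t * size rho.
Proof. by elim: t => //= t IH; rewrite size_cat IH mulSn. Qed.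

Lemma spowD (T : eqType) (rho : seq T) t1 t2 :
  spow rho (t1 + t2) = spow rho t1 ++ spow rho t2.
Proof. by rewrite /spow nseqD flatten_cat. Qed.

Lemma occurs_at_map (T U : eqType) (g : T -> U) (P S : seq T) p :
  injective g -> occurs_at (map g P) (map g S) p = occurs_at P S p.
Proof.
move=> g_inj; rewrite /occurs_at size_map -map_drop -map_take.
by apply/eqP/eqP => [/(inj_map g_inj)|->].
Qed.

Definition splice (T : Type) (s : seq T) (i n : nat) (W : seq T) : seq T :=
  take i s ++ W ++ drop (i + n) s.

Lemma map_splice (T U : Type) (g : T -> U) (s : seq T) i n W :
  map g (splice s i n W) = splice (map g s) i n (map g W).
Proof. by rewrite /splice !map_cat map_take map_drop. Qed.

Lemma size_splice (T : Type) (s : seq T) i n W : i + n <= size s ->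
  size (splice s i n W) = size s - n + size W.
Proof. by move=> le_s; rewrite /splice !size_cat size_drop size_takel; lia. Qed.

Lemma rk_splice (T : eqType) (Q s : seq T) (W : seq (option T)) : infix Q s ->
  rk Q W s = splice (map Some s) (infix_index Q s) (size Q) W.
Proof. by move=> Qs; rewrite /rk Qs /splice map_take map_drop. Qed.

Section NthSplice.
Variables (T : Type) (x0 : T) (s W : seq T) (i n k : nat).
Hypothesis le_s : i + n <= size s.

Lemma nth_splice_lt : k < i -> nth x0 (splice s i n W) k = nth x0 s k.
Proof. by move=> lt_ki; rewrite /splice nth_cat size_takel ?lt_ki ?nth_take //; lia. Qed.

Lemma nth_splice_mid : i <= k < i + size W ->
  nth x0 (splice s i n W) k = nth x0 W (k - i).
Proof.
move=> lt_k; rewrite /splice nth_cat size_takel ?ifF; try lia.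
by rewrite nth_cat ifT //; lia.
Qed.

Lemma nth_splice_ge : i + size W <= k ->
  nth x0 (splice s i n W) k = nth x0 s (k + n - size W).
Proof.
move=> ge_k; rewrite /splice nth_cat size_takel ?ifF; try lia.
by rewrite nth_cat ifF ?nth_drop; [congr nth | ..]; lia.
Qed.

End NthSplice.

Section Occurrences.
Variable T : eqType.
Implicit Types (B P Q S W s : seq T).

Lemma occurs_atP (x0 : T) {P S : seq T} {p : nat} : 0 < size P ->
  reflect (p + size P <= size S /\
           forall k, k < size P -> nth x0 S (p + k) = nth x0 P k)
          (occurs_at P S p).
Proof.
move=> P0; apply: (iffP eqP) => [def_P | [le_PS eq_nth]].
  have := congr1 size def_P; rewrite size_take_min size_drop => sizeP.
  split=> [|k lt_kP]; first lia.
  by rewrite -[in RHS]def_P nth_take // nth_drop.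
apply: (eq_from_nth (x0 := x0)) => [|k]; first by rewrite size_take_min size_drop; lia.
by rewrite size_take_min size_drop => lt_k; rewrite nth_take ?nth_drop ?eq_nth //; lia.
Qed.

Lemma occurs_at_size Q S i : 0 < size Q -> occurs_at Q S i -> i + size Q <= size S.
Proof.
by move=> Q0 /eqP/(congr1 size); rewrite size_take_min size_drop; lia.
Qed.

Lemma occurs_at_trans Q P S a p : 0 < size Q ->
  occurs_at Q P a -> occurs_at P S p -> occurs_at Q S (p + a).
Proof.
move=> Q0; have x0 : T by case: Q Q0 => [|x].
move=> /(occurs_atP x0 Q0) [le_QP QP].
have P0 : 0 < size P by lia.
move=> /(occurs_atP x0 P0) [le_PS PS]; apply/(occurs_atP x0 Q0).
by split=> [|k lt_k]; [lia | rewrite -addnA PS ?QP //; lia].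
Qed.

Lemma occurs_at_period (x0 : T) Q S i d : 0 < size Q ->
  occurs_at Q S i -> occurs_at Q S (i + d) ->
  forall k, k + d < size Q -> nth x0 Q k = nth x0 Q (k + d).
Proof.
move=> Q0 /(occurs_atP x0 Q0) [_ QSi] /(occurs_atP x0 Q0) [_ QSid] k lt_k.
by rewrite -QSid -?QSi -?addnA 1?[d + k]addnC //; lia.
Qed.

Lemma occurs_at_infix_index Q S : infix Q S -> occurs_at Q S (infix_index Q S).
Proof. by rewrite infixE. Qed.

Lemma infix_index_min Q S j : occurs_at Q S j -> infix_index Q S <= j.
Proof.
elim: S j => [|y S IH] j; first by rewrite /occurs_at /= => /eqP <-.
rewrite /=; case: ifP => // not_pre; case: j => [|j].
  by rewrite /occurs_at drop0 -prefixE; move: not_pre => /= ->.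
exact: IH.
Qed.

Lemma occurs_at_infix Q S j : 0 < size Q -> occurs_at Q S j -> infix Q S.
Proof.
move=> Q0 QSj; have x0 : T by case: Q Q0 {QSj} => [|x].
rewrite -infixTindex.
have := infix_index_min QSj; case/(occurs_atP x0 Q0): QSj; lia.
Qed.

Lemma occurs_at_splice B P S W a p : 0 < size B -> 0 < size W ->
  occurs_at B P a -> occurs_at B S (p + a) ->
  occurs_at (splice P a (size B) W) (splice S (p + a) (size B) W) p
  = occurs_at P S p.
Proof.
move=> B0 W0; have x0 : T by case: B B0 => [|x].
move=> /(occurs_atP x0 B0) [le_BP BP] /(occurs_atP x0 B0) [le_BS BS].
have P0 : 0 < size P by lia.
have PW0 : 0 < size (splice P a (size B) W) by rewrite size_splice; lia.
apply/(occurs_atP x0 PW0)/(occurs_atP x0 P0); rewrite !size_splice //.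
  move=> [le_sz eq_nth]; split=> [|k lt_k]; first lia.
  case: (ltnP k a) => [lt_ka|ge_ka].
    by have := eq_nth k; rewrite nth_splice_lt ?nth_splice_lt //; [apply | ..]; lia.
  case: (ltnP k (a + size B)) => [lt_kaB|ge_kaB].
    by rewrite (_ : k = a + (k - a)) ?addnA ?BS ?BP //; lia.
  have := eq_nth (k - size B + size W).
  rewrite nth_splice_ge ?nth_splice_ge; try lia.
  rewrite (_ : p + (k - size B + size W) + size B - size W = p + k); last lia.
  by rewrite (_ : k - size B + size W + size B - size W = k); [apply | ..]; lia.
move=> [le_sz eq_nth]; split=> [|k lt_k]; first lia.
case: (ltnP k a) => [lt_ka|ge_ka].
  by rewrite nth_splice_lt ?nth_splice_lt ?eq_nth //; lia.
case: (ltnP k (a + size W)) => [lt_kaW|ge_kaW].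
  by rewrite !nth_splice_mid ?subnDl //; lia.
rewrite nth_splice_ge ?nth_splice_ge; try lia.
by rewrite (_ : p + k + size B - size W = p + (k + size B - size W)) ?eq_nth //; lia.
Qed.

Lemma nth_period (x0 : T) Q d k : is_period Q d -> k + d < size Q ->
  nth x0 Q k = nth x0 Q (k + d).
Proof.
case/andP=> _ /eqP eq_Q lt_k.
have := congr1 (nth x0 ^~ k) eq_Q; rewrite /= nth_take ?nth_drop 1?addnC //; lia.
Qed.

Lemma nth_mod_period (x0 : T) Q d k : is_period Q d -> k < size Q ->
  nth x0 Q k = nth x0 Q (k %% d).
Proof.
move=> per_d; have d_gt0 : 0 < d by case/andP: per_d.
elim/ltn_ind: k => k IH lt_k; case: (ltnP k d) => [lt_kd|ge_kd].
  by rewrite modn_small.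
rewrite -(subnK ge_kd) -nth_period ?subnK // IH; try lia.
by rewrite -[in RHS](subnK ge_kd) modnDr.
Qed.

Lemma per_le (x0 : T) Q d : 0 < d <= size Q ->
  (forall k, k + d < size Q -> nth x0 Q k = nth x0 Q (k + d)) -> per Q <= d.
Proof.
move=> /andP [d_gt0 le_d] Qd.
have per_d : is_period Q d.
  rewrite /is_period d_gt0; apply/eqP/(eq_from_nth (x0 := x0)) => [|k].
    by rewrite size_takel ?size_drop //; lia.
  rewrite size_takel => [lt_k|]; last lia.
  by rewrite nth_take ?nth_drop 1?addnC -?Qd //; lia.
rewrite /per ltnNge; apply/negP => le_find.
have /(before_find 0) : d.-1 < find (is_period Q) (iota 1 (size Q)) by lia.
by rewrite nth_iota ?add1n ?prednK ?per_d //; lia.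
Qed.

Lemma per_le_size Q : 0 < size Q -> per Q <= size Q.
Proof.
move=> Q0; have x0 : T by case: Q Q0 => [|x].
by apply: (per_le (x0 := x0)) => [|k]; [rewrite Q0 leqnn | lia].
Qed.

Lemma is_period_per Q : 0 < size Q -> is_period Q (per Q).
Proof.
move=> Q0; have has_per : has (is_period Q) (iota 1 (size Q)).
  apply/hasP; exists (size Q); first by rewrite mem_iota; lia.
  by rewrite /is_period Q0 subnn take0 drop_size.
have := nth_find 0 has_per; rewrite has_find size_iota in has_per.
by rewrite nth_iota ?add1n.
Qed.

Lemma infix_index_lt_per Q S i : 0 < size Q -> size S < size Q + per Q ->
  occurs_at Q S i -> infix_index Q S = i.
Proof.
move=> Q0 lt_S QSi; have x0 : T by case: Q Q0 {lt_S QSi} => [|x].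
have QS := occurs_at_infix Q0 QSi.
have QSb := occurs_at_infix_index QS; have le_bi := infix_index_min QSi.
have le_iS : i + size Q <= size S by case/(occurs_atP x0 Q0): QSi.
apply/eqP; rewrite eqn_leq le_bi /= leqNgt; apply/negP => lt_bi.
have QSi' : occurs_at Q S (infix_index Q S + (i - infix_index Q S)).
  by rewrite subnKC // ltnW.
have per_size := per_le_size Q0.
have : per Q <= i - infix_index Q S.
  by apply: (per_le _ (occurs_at_period x0 Q0 QSb QSi')); apply/andP; split; lia.
lia.
Qed.

End Occurrences.

Section Runs.
Variables (T : eqType) (x0 : T) (f : nat -> T) (q : nat).
Hypotheses (q_gt0 : 0 < q) (fq : forall k, f (k + q) = f k).
Implicit Types (P Q S s : seq T).

Definition run s i L := i + L <= size s /\ forall j, j < L -> nth x0 s (i + j) = f j.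

Lemma f_addmul c k : f (k + c * q) = f k.
Proof. by elim: c k => [|c IH] k; rewrite ?addn0 // mulSn addnA IH fq. Qed.

Lemma f_shift e : (forall j, j < q -> f (j + e) = f j) -> forall j, f (j + e) = f j.
Proof.
move=> fe j; have def_j := divn_eq j q.
rewrite (_ : j + e = j %% q + e + j %/ q * q); last lia.
by rewrite f_addmul fe ?ltn_pmod // {2}def_j addnC f_addmul.
Qed.

Lemma run_le s i L L' : L' <= L -> run s i L -> run s i L'.
Proof. by move=> le_L [le_s sf]; split=> [|j lt_j]; [lia | apply: sf; lia]. Qed.

Lemma occurs_at_run {Q s i} : 0 < size Q ->
  (forall k, k < size Q -> nth x0 Q k = f k) ->
  occurs_at Q s i <-> run s i (size Q).
Proof.
move=> Q0 Qf; split=> [/(occurs_atP x0 Q0) [le_s Qs] | [le_s sf]].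
  by split=> // j lt_j; rewrite Qs ?Qf.
by apply/(occurs_atP x0 Q0); split=> // k lt_k; rewrite sf ?Qf.
Qed.

Lemma run_occurs_at P S p i L : 0 < L ->
  occurs_at P S p -> run P i L -> run S (p + i) L.
Proof.
move=> L0 PSp [le_P Pf]; have P0 : 0 < size P by lia.
case/(occurs_atP x0 P0): PSp => le_S PS.
by split=> [|j lt_j]; [lia | rewrite -addnA PS ?Pf //; lia].
Qed.

Lemma run_period_shift s i e L L' : q + e <= L -> q <= L' ->
  run s i L -> run s (i + e) L' -> forall j, f (j + e) = f j.
Proof.
move=> le_L le_L' [_ sf] [_ sf']; apply: f_shift => j lt_j.
rewrite -(sf' j (leq_trans lt_j le_L')) -sf; last lia.
by rewrite addnA addnAC.
Qed.

Lemma run_split s i e L : (forall j, f (j + e) = f j) ->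
  run s i (e + L) <-> run s i e /\ run s (i + e) L.
Proof.
move=> fe; split=> [[le_s sf] | [[le_s sf] [le_s' sf']]].
  split; split=> [|j lt_j]; try lia; first by apply: sf; lia.
  by rewrite -addnA sf 1?addnC ?fe //; lia.
split=> [|j lt_j]; first lia.
case: (ltnP j e) => [|ge_j]; first exact: sf.
rewrite (_ : i + j = i + e + (j - e)); last lia.
by rewrite sf' -1?[in RHS](subnK ge_j) ?fe //; lia.
Qed.

Lemma run_merge s i e L L' : q + e <= L -> q <= L' ->
  run s i L -> run s (i + e) L' -> run s i (e + L').
Proof.
move=> le_L le_L' sL sL'; have fe := run_period_shift le_L le_L' sL sL'.
by apply/run_split => //; split=> //; apply: run_le sL; lia.
Qed.

Variable c : nat.

Lemma run_splice_nil s b L : run s b (c * q) ->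
  run (splice s b (c * q) [::]) b L <-> run s b (c * q + L).
Proof.
move=> [le_s sf]; split=> [[le_del delf] | [le_s' sf']].
  rewrite size_splice ?addn0 // in le_del.
  split=> [|j lt_j]; first lia.
  case: (ltnP j (c * q)) => [|ge_j]; first exact: sf.
  have := delf (j - c * q); rewrite nth_splice_ge ?addn0 ?subn0; try lia.
  rewrite -addnA subnK // => ->; last lia.
  by rewrite -[in RHS](subnK ge_j) f_addmul.
split=> [|j lt_j]; first by rewrite size_splice ?addn0; lia.
rewrite nth_splice_ge ?addn0 ?subn0 ?leq_addr //.
by rewrite -addnA sf' ?f_addmul //; lia.
Qed.

Lemma run_splice_nil_prefix s b i L : b + c * q <= size s -> i + L <= b ->
  run (splice s b (c * q) [::]) i L -> run s i L.
Proof.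
move=> le_s le_b [_ delf]; split=> [|j lt_j]; first lia.
by rewrite -delf // nth_splice_lt //; lia.
Qed.

Lemma splice_nil_run_shift s b e L : c * q <= L -> run s b (e + L) ->
  splice s (b + e) (c * q) [::] = splice s b (c * q) [::].
Proof.
move=> le_L [le_s sf]; apply: (eq_from_nth (x0 := x0)) => [|k _].
  by rewrite !size_splice //; lia.
case: (ltnP k b) => [lt_kb|ge_kb].
  by rewrite !nth_splice_lt //; lia.
rewrite [RHS]nth_splice_ge ?addn0 ?subn0; try lia.
case: (ltnP k (b + e)) => [lt_kbe|ge_kbe]; last first.
  by rewrite nth_splice_ge ?addn0 ?subn0 //; lia.
rewrite nth_splice_lt; try lia.
rewrite -(subnKC ge_kb) sf -?addnA ?sf ?f_addmul 1?addnC //; lia.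
Qed.

Lemma splice_nil_infix_index Q S i : 0 < size Q ->
  (forall k, k < size Q -> nth x0 Q k = f k) ->
  q + (size S - size Q) <= size Q -> c * q <= size Q -> occurs_at Q S i ->
  splice S (infix_index Q S) (c * q) [::] = splice S i (c * q) [::].
Proof.
move=> Q0 Qf slack le_cQ QSi.
have QSb := occurs_at_infix_index (occurs_at_infix Q0 QSi).
have le_bi := infix_index_min QSi.
move/(occurs_at_run Q0 Qf): QSi => runSi; move/(occurs_at_run Q0 Qf): QSb => runSb.
have le_iS : i + size Q <= size S by case: runSi.
rewrite -(subnKC le_bi) in runSi *.
by symmetry; apply: (splice_nil_run_shift le_cQ); apply: run_merge runSb runSi; lia.
Qed.

Lemma occurs_at_splice_nil Q P S a b p : 0 < size Q ->
  (forall k, k < size Q -> nth x0 Q k = f k) ->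
  q + (size S - size Q) <= size Q - c * q ->
  occurs_at Q P a -> occurs_at Q S b ->
  occurs_at (splice P a (c * q) [::]) (splice S b (c * q) [::]) p ->
  occurs_at Q S (p + a).
Proof.
move=> Q0 Qf slack /(occurs_at_run Q0 Qf) runPa /(occurs_at_run Q0 Qf) runSb occ.
apply/(occurs_at_run Q0 Qf); set m := size Q - c * q; have m0 : 0 < m by lia.
have le_cQ : c * q <= size Q by lia.
have size_Q : c * q + m = size Q by rewrite subnKC.
have run_shrink s i : run s i (size Q) -> run (splice s i (c * q) [::]) i m.
  by move=> r; apply/(run_splice_nil _ (run_le le_cQ r)); rewrite size_Q.
have runDSpa := run_occurs_at m0 occ (run_shrink _ _ runPa).
have runDSb := run_shrink _ _ runSb.
(* By [slack], these two runs of the shortened S overlap in at least q letters. *)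
have le_bS : b + size Q <= size S by case: runSb.
have le_paS : p + a + size Q <= size S.
  by case: runDSpa; rewrite size_splice ?addn0; lia.
case: (leqP b (p + a)) => [le_b_pa | lt_pa_b].
  rewrite -(subnKC le_b_pa) in runDSpa *; set e := p + a - b in runDSpa *.
  have fe : forall j, f (j + e) = f j by apply: run_period_shift runDSb runDSpa; lia.
  have /(run_splice_nil _ (run_le le_cQ runSb)) : run (splice S b (c * q) [::]) b (e + m).
    by apply: run_merge runDSb runDSpa; lia.
  by rewrite addnCA size_Q => /(iffLR (run_split _ _ _ fe)) [].
set e := b - (p + a).
have runDSb' : run (splice S b (c * q) [::]) (p + a + e) m by rewrite subnKC // ltnW.
have fe : forall j, f (j + e) = f j by apply: run_period_shift runDSpa runDSb'; lia.
apply: (run_le (_ : _ <= e + size Q)); first lia.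
apply/(iffRL (run_split _ _ _ fe)); split; last by rewrite subnKC // ltnW.
by apply: (run_splice_nil_prefix (_ : b + c * q <= size S)) (run_le _ runDSpa); lia.
Qed.

End Runs.

Lemma splice_drop (T : eqType) (Q s : seq T) i d : d <= size Q ->
  occurs_at Q s i -> splice s i (size Q) (drop d Q) = splice s i d [::].
Proof.
move=> le_dQ /eqP def_Q; rewrite /splice; congr (_ ++ _).
have def_s : drop i s = Q ++ drop (i + size Q) s.
  by rewrite -{1}(cat_take_drop (size Q) (drop i s)) def_Q drop_drop addnC.
rewrite cat0s [in RHS]addnC -[in RHS]drop_drop def_s drop_cat.
case: ltnP => [//|ge_dQ]; have -> : d = size Q by lia.
by rewrite drop_size subnn drop0.
Qed.

Lemma rk_occurs_at (T : eqType) (Q P S : seq T) (W : seq (option T)) p :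
  0 < size Q -> 0 < size W -> infix Q P ->
  (forall i, occurs_at Q S i -> rk Q W S = splice (map Some S) i (size Q) W) ->
  (infix Q S -> occurs_at (rk Q W P) (rk Q W S) p ->
   occurs_at Q S (p + infix_index Q P)) ->
  occurs_at P S p <-> occurs_at (rk Q W P) (rk Q W S) p.
Proof.
move=> Q0 W0 QP rkS rk_occ; have QPa := occurs_at_infix_index QP.
have le_aP := occurs_at_size Q0 QPa.
have key : occurs_at Q S (p + infix_index Q P) ->
    occurs_at (rk Q W P) (rk Q W S) p = occurs_at P S p.
  move=> QSpa; have Some_inj' : injective (@Some T) by move=> x y [].
  rewrite (rkS _ QSpa) rk_splice // -(size_map Some) occurs_at_splice ?size_map
          ?occurs_at_map //.
split=> [PS | occ]; first by rewrite key //; apply: occurs_at_trans QPa PS.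
have QS : infix Q S.
  apply: contraTT occ => /negbTE nQS.
  rewrite /occurs_at (rk_splice _ QP) /rk nQS /= eq_sym -size_eq0 -lt0n.
  by rewrite size_splice ?size_map // addn_gt0 W0 orbT.
by rewrite -key ?rk_occ.
Qed.

Lemma rk_hash_aligned (T : eqType) (Q P S : seq T) p :
  0 < size Q -> infix Q P -> infix Q S ->
  occurs_at (rk Q [:: hash] P) (rk Q [:: hash] S) p ->
  occurs_at Q S (p + infix_index Q P).
Proof.
move=> Q0 QP QS; have x0 : T by case: Q Q0 {QP QS} => [|x].
have QSb := occurs_at_infix_index QS; have le_bS := occurs_at_size Q0 QSb.
have le_aP := occurs_at_size Q0 (occurs_at_infix_index QP).
rewrite !rk_splice //; set a := infix_index Q P in le_aP *.
set b := infix_index Q S in QSb le_bS *.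
have le_bS' : b + size Q <= size (map Some S) by rewrite size_map.
have P0 : 0 < size (splice (map Some P) a (size Q) [:: hash]).
  by rewrite size_splice ?size_map // addn1.
case/(occurs_atP None P0); rewrite !size_splice ?size_map //= => le_sz eq_nth.
(* # is the only [None] of r_k(S). *)
have hash_at : nth None (splice (map Some S) b (size Q) [:: hash]) (p + a) = hash.
  by rewrite eq_nth ?nth_splice_mid ?subnn ?size_splice ?size_map ?addn1 ?leqnn ?ltnSn //; lia.
suff eq_b : p + a = b by rewrite eq_b.
case: (ltngtP (p + a) b) => [lt_pa_b|lt_b_pa|//].
  move: hash_at; rewrite nth_splice_lt //.
  by rewrite (nth_map x0) //; lia.
move: hash_at; rewrite nth_splice_ge /=; try lia.
by rewrite (nth_map x0) //; lia.
Qed.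

Lemma occurs_at_rk_hash (T : eqType) (Q P S : seq T) p :
  0 < size Q -> size S < size Q + per Q -> infix Q P ->
  occurs_at P S p <-> occurs_at (rk Q [:: hash] P) (rk Q [:: hash] S) p.
Proof.
move=> Q0 lt_S QP; apply: rk_occurs_at => //; last exact: rk_hash_aligned.
move=> i QSi; rewrite rk_splice ?(occurs_at_infix Q0 QSi) //.
by rewrite (infix_index_lt_per Q0 lt_S QSi).
Qed.

Lemma occurs_at_rk_drop (T : eqType) (Q P S : seq T) q c p :
  0 < size Q -> is_period Q q -> q + (size S - size Q) <= size Q - c * q ->
  infix Q P ->
  occurs_at P S p <->
  occurs_at (rk Q (map Some (drop (c * q) Q)) P) (rk Q (map Some (drop (c * q) Q)) S) p.
Proof.
move=> Q0 per_q slack QP; have x0 : T by case: Q Q0 {per_q slack QP} => [|x].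
have q_gt0 : 0 < q by case/andP: per_q.
pose f k := nth x0 Q (k %% q).
have fq k : f (k + q) = f k by rewrite /f modnDr.
have Qf k : k < size Q -> nth x0 Q k = f k := nth_mod_period x0 per_q.
have le_cQ : c * q <= size Q by lia.
have rk_drop s : infix Q s ->
    rk Q (map Some (drop (c * q) Q)) s = map Some (splice s (infix_index Q s) (c * q) [::]).
  by move=> Qs; rewrite rk_splice // -map_splice splice_drop ?occurs_at_infix_index.
apply: rk_occurs_at => //; first by rewrite size_map size_drop; lia.
  move=> i QSi; rewrite rk_drop ?(occurs_at_infix Q0 QSi) //.
  rewrite (splice_nil_infix_index q_gt0 fq Q0 Qf _ le_cQ QSi); last lia.
  by rewrite -(splice_drop le_cQ QSi) map_splice.
move=> QS; rewrite !rk_drop // occurs_at_map; last by move=> x y [].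
by apply: (occurs_at_splice_nil q_gt0 fq Q0 Qf) => //; apply: occurs_at_infix_index.
Qed.

Lemma drop_spow (T : eqType) (Q rho rho' : seq T) t t' :
  Q = spow rho t ++ rho' -> t' <= t ->
  drop ((t - t') * size rho) Q = spow rho t' ++ rho'.
Proof.
move=> -> le_t; rewrite -[in spow rho t](subnK le_t) spowD -catA.
by rewrite drop_size_cat // size_spow.
Qed.

Theorem lemma6 (A : eqType) (tau ell : nat) (Sk : seq A)
    (Q' : seq (option A)) (P S : seq A) (p : nat) :
  1 <= tau -> 10 * tau < ell -> ell <= size Sk ->
  valid_Qprime tau (Qk tau ell Sk) Q' ->
  size S <= size (Qk tau ell Sk) + 4 * tau ->
  infix (Qk tau ell Sk) P ->
  occurs_at P S p <->
  occurs_at (rk (Qk tau ell Sk) Q' P) (rk (Qk tau ell Sk) Q' S) p.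
Proof.
move=> tau_gt0 lt_ell le_ell valid le_S QP.
set Q := Qk tau ell Sk in valid le_S QP *.
have size_Q : size Q = ell - 2 * tau by rewrite size_drop size_takel.
have Q0 : 0 < size Q by lia.
move: valid; rewrite /valid_Qprime; case: ifP => [lt_per -> | le_per].
  by apply: occurs_at_rk_hash => //; lia.
case=> t [t' [rho' [def_Q _ le_t -> /andP [size_Q' _]]]].
have size_rho : size (take (per Q) Q) = per Q by rewrite size_takel ?per_le_size.
rewrite -(drop_spow def_Q le_t) size_rho size_map size_drop in size_Q' *.
by apply: occurs_at_rk_drop (is_period_per Q0) _ QP; lia.
Qed.
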